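(* Let $V^{2n}$ be a real vector space with $J\in\mathrm{Aut}(V)$, $J^2=-I$, and a positive definite inner product $(\,,\,)$ for which $J$ is an isometry. Let $\mathbb{L}^p$, $p\geq 2$, be a real vector space with a Lorentzian inner product $\langle\,,\,\rangle$, let $\alpha\colon V^{2n}\times V^{2n}\to\mathbb{L}^p$ be a symmetric bilinear form, and suppose there is a light-like $w\in\mathbb{L}^p$ with $\langle\alpha(X,Y),w\rangle=-(X,Y)$ for all $X,Y$. Let $\beta,\gamma\colon V^{2n}\times V^{2n}\to W^{p,p}$ be defined by $\beta(X,Y)=(\alpha(X,Y)+\alpha(JX,JY),\alpha(X,JY)-\alpha(JX,Y))$ and $\gamma(X,Y)=(\alpha(X,Y),\alpha(X,JY))$. Assume $\beta$ is flat and $$\langle\!\langle\beta(X,Y),\gamma(Z,T)\rangle\!\rangle=\langle\!\langle\beta(X,T),\gamma(Z,Y)\rangle\!\rangle\quad\text{for all }X,Y,Z,T\in V^{2n}.$$ If $\mathcal{S}(\beta)$ is degenerate and $s\leq n-1$, then there is a $J$-invariant vector subspace $P^{2m}\subset V^{2n}$ with $m\geq n-s+1$ such that $$\langle\alpha(S,S),\alpha(JS,JS)\rangle-\langle\alpha(S,JS),\alpha(S,JS)\rangle\leq 0\quad\text{for all }S\in P^{2m}.$$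
   Context: $W^{p,p}=\mathbb{L}^p\oplus\mathbb{L}^p$ carries the inner product $\langle\!\langle(\xi,\bar\xi),(\eta,\bar\eta)\rangle\!\rangle=\langle\xi,\eta\rangle-\langle\bar\xi,\bar\eta\rangle$. $\beta$ is flat if $\langle\!\langle\beta(X,Y),\beta(Z,T)\rangle\!\rangle=\langle\!\langle\beta(X,T),\beta(Z,Y)\rangle\!\rangle$ for all $X,Y,Z,T$. $\mathcal{S}(\beta)=\mathrm{span}\{\beta(X,Y):X,Y\in V\}$; it is degenerate if $\mathcal S(\beta)\cap\mathcal S(\beta)^\perp\neq0$ with respect to $\langle\!\langle\,,\,\rangle\!\rangle$. $s=\dim U_0^s$, where $U_0^s=\pi_1(\mathcal{S}(\beta))\subset\mathbb{L}^p$ is the projection of $\mathcal S(\beta)$ onto the first factor. *)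

From HB Require Import structures.
From mathcomp Require Import all_boot all_order all_algebra.
From mathcomp Require Import reals.
Set Implicit Arguments. Unset Strict Implicit. Unset Printing Implicit Defensive.
Import Order.TTheory GRing.Theory Num.Theory.
Local Open Scope ring_scope.

Section Defs.
Variable R : realType.

Definition bform (k : nat) (M : 'M[R]_k) (x y : 'rV[R]_k) : R :=
  (x *m M *m y^T) 0 0.

Definition pos_def_inner (k : nat) (G : 'M[R]_k) : Prop :=
  G^T = G /\ forall x : 'rV[R]_k, x != 0 -> 0 < bform G x x.

(* Lorentzian (signature (p-1,1)) symmetric Gram matrix:
   congruent to diag(-1,1,...,1) *)
Definition lorentz_diag (p : nat) : 'M[R]_p :=
  diag_mx (\row_(i < p) (if (i : nat) == 0%N then -1 else 1)).

Definition lorentzian (p : nat) (L : 'M[R]_p) : Prop :=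
  L^T = L /\ exists P : 'M[R]_p, P \in unitmx /\ P *m L *m P^T = lorentz_diag p.

Definition sym_bilinear (k p : nat) (a : 'rV[R]_k -> 'rV[R]_k -> 'rV[R]_p) : Prop :=
  (forall X Y, a X Y = a Y X) /\
  (forall (c : R) X Y Z, a (c *: X + Y) Z = c *: a X Z + a Y Z).

(* W^{p,p} = L^p (+) L^p represented as 'rV_(p + p) via row_mx *)
Definition wform (p : nat) (L : 'M[R]_p) (u v : 'rV[R]_(p + p)) : R :=
  bform L (lsubmx u) (lsubmx v) - bform L (rsubmx u) (rsubmx v).

(* J acts on row vectors by right multiplication: JX := X *m J *)
Definition betaF (k p : nat) (J : 'M[R]_k) (a : 'rV[R]_k -> 'rV[R]_k -> 'rV[R]_p)
  (X Y : 'rV[R]_k) : 'rV[R]_(p + p) :=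
  row_mx (a X Y + a (X *m J) (Y *m J)) (a X (Y *m J) - a (X *m J) Y).

Definition gammaF (k p : nat) (J : 'M[R]_k) (a : 'rV[R]_k -> 'rV[R]_k -> 'rV[R]_p)
  (X Y : 'rV[R]_k) : 'rV[R]_(p + p) :=
  row_mx (a X Y) (a X (Y *m J)).

Definition flat (k p : nat) (L : 'M[R]_p) (b : 'rV[R]_k -> 'rV[R]_k -> 'rV[R]_(p + p)) : Prop :=
  forall X Y Z T, wform L (b X Y) (b Z T) = wform L (b X T) (b Z Y).

Definition in_Sspan (k q : nat) (b : 'rV[R]_k -> 'rV[R]_k -> 'rV[R]_q) (v : 'rV[R]_q) : Prop :=
  exists (N : nat) (Xs Ys : 'I_N -> 'rV[R]_k) (cs : 'I_N -> R),
    v = \sum_(i < N) cs i *: b (Xs i) (Ys i).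

Definition S_degenerate (k p : nat) (L : 'M[R]_p) (b : 'rV[R]_k -> 'rV[R]_k -> 'rV[R]_(p + p)) : Prop :=
  exists v, v != 0 /\ in_Sspan b v /\ (forall u, in_Sspan b u -> wform L v u = 0).

(* U0^s = pi_1(S(b)) *)
Definition U0 (k p : nat) (b : 'rV[R]_k -> 'rV[R]_k -> 'rV[R]_(p + p)) (u : 'rV[R]_p) : Prop :=
  exists v, in_Sspan b v /\ u = lsubmx v.

Definition has_dim (p : nat) (U : 'rV[R]_p -> Prop) (d : nat) : Prop :=
  exists B : 'M[R]_(d, p), row_free B /\ forall u, U u <-> (u <= B)%MS.

End Defs.

From HB Require Import structures.
From mathcomp Require Import all_boot all_order all_algebra.
From mathcomp Require Import reals.
From mathcomp Require Import zify ring lra.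
From Stdlib Require Import Classical.
Set Implicit Arguments. Unset Strict Implicit. Unset Printing Implicit Defensive.
Import Order.TTheory GRing.Theory Num.Theory.
Local Open Scope ring_scope.

(* Write beta = (beta1, beta2).  Degeneracy of S(beta) gives a light-like eta in U0
   orthogonal to every beta1(X, Y); as <beta1(X, X), w> = -2 (X, X), eta is not
   proportional to w, so after rescaling eta to nu with <nu, w> = 2 the orthogonal
   complement of {nu, w} is space-like.  delta(X, Y) = beta1(X, Y) + (X, Y) nu lies in
   that complement, and beta_hat(X, Y) = (delta(X, Y), delta(X, JY)) is flat with the
   same inner products as beta.  At a point x0 where beta_hat(x0, _) has maximal rank,
   flatness and positivity force delta(t, _) = 0 on the J-invariant kernel P of
   beta_hat(x0, _); as the image of delta(x0, _) lies in U0 but misses beta1(X, X),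
   dim P >= 2 (n - s + 1).  On P the condition on gamma forces nu to be orthogonal to
   the image of alpha, and then alpha(S, S) + alpha(JS, JS) = -(S, S) nu turns the
   curvature expression into minus a sum of two space-like squares. *)

Section BilinearForm.
Variables (R : realType) (k : nat) (M : 'M[R]_k).
Implicit Types x y z : 'rV[R]_k.

Lemma bformDl x y z : bform M (x + y) z = bform M x z + bform M y z.
Proof. by rewrite /bform !mulmxDl mxE. Qed.

Lemma bformZl a x z : bform M (a *: x) z = a * bform M x z.
Proof. by rewrite /bform -!scalemxAl mxE. Qed.

Lemma bformDr x y z : bform M x (y + z) = bform M x y + bform M x z.
Proof. by rewrite /bform linearD /= mulmxDr mxE. Qed.

Lemma bformZr a x z : bform M x (a *: z) = a * bform M x z.
Proof. by rewrite /bform linearZ /= -scalemxAr mxE. Qed.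

Lemma bformNl x z : bform M (- x) z = - bform M x z.
Proof. by rewrite -scaleN1r bformZl mulN1r. Qed.

Lemma bformNr x z : bform M x (- z) = - bform M x z.
Proof. by rewrite -scaleN1r bformZr mulN1r. Qed.

Lemma bformBl x y z : bform M (x - y) z = bform M x z - bform M y z.
Proof. by rewrite bformDl bformNl. Qed.

Lemma bformBr x y z : bform M x (y - z) = bform M x y - bform M x z.
Proof. by rewrite bformDr bformNr. Qed.

Lemma bform0l z : bform M 0 z = 0.
Proof. by rewrite -(scale0r 0) bformZl mul0r. Qed.

Lemma bform0r z : bform M z 0 = 0.
Proof. by rewrite -(scale0r 0) bformZr mul0r. Qed.

Lemma bform_sumr N (f : 'I_N -> 'rV[R]_k) z :
  bform M z (\sum_(i < N) f i) = \sum_(i < N) bform M z (f i).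
Proof. by apply: (big_morph (bform M z)) => [x y|]; rewrite ?bformDr ?bform0r. Qed.

Lemma bform_sym x y : M^T = M -> bform M x y = bform M y x.
Proof.
move=> MT; rewrite /bform; transitivity ((x *m M *m y^T)^T 0 0); first by rewrite [RHS]mxE.
by rewrite !trmx_mul trmxK MT mulmxA.
Qed.

Lemma bform_diag (d : 'rV[R]_k) x y : bform (diag_mx d) x y = \sum_i x 0 i * y 0 i * d 0 i.
Proof. by rewrite /bform mul_mx_diag mxE; apply: eq_bigr => i _; rewrite !mxE mulrAC. Qed.

End BilinearForm.

Lemma dim_gt0_of_rV_neq0 (R : realType) p (x : 'rV[R]_p) : x != 0 -> (0 < p)%N.
Proof. by case: p x => // x; rewrite [x]thinmx0 eqxx. Qed.

Section Lorentzian.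
Variables (R : realType) (p : nat) (L : 'M[R]_p).
Hypothesis L_lor : lorentzian L.

Lemma lorentz_diag_gt0 (i0 : 'I_p) (x : 'rV[R]_p) :
  val i0 = 0%N -> x 0 i0 = 0 -> x != 0 -> 0 < bform (lorentz_diag R p) x x.
Proof.
move=> i00 xi0 x_neq0; rewrite /lorentz_diag bform_diag.
rewrite (eq_bigr (fun i => x 0 i ^+ 2)) => [|i _]; last first.
  rewrite mxE; case: ifP => [/eqP i0E | _]; last by rewrite mulr1.
  have -> : i = i0 by apply: val_inj; rewrite /= i0E i00.
  by rewrite xi0 expr2 !mul0r.
rewrite lt0r sumr_ge0 ?andbT => [|i _]; last exact: sqr_ge0.
apply: contra x_neq0 => /eqP/psumr_eq0P sum0; apply/eqP/rowP => i.
by rewrite mxE; apply/eqP; rewrite -sqrf_eq0 sum0 // => j _; apply: sqr_ge0.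
Qed.

Lemma lorentzian_congr : exists2 Q : 'M[R]_p, Q \in unitmx &
  forall x y, bform L x y = bform (lorentz_diag R p) (x *m Q) (y *m Q).
Proof.
case: L_lor => _ [P [uP PLP]]; exists (invmx P); first by rewrite unitmx_inv.
move=> x y; rewrite /bform -PLP trmx_mul !mulmxA (mulmxKV uP).
by rewrite -(mulmxA _ P^T) -trmx_mul mulVmx // trmx1 mulmx1.
Qed.

Lemma lorentzian_orth_timelike_gt0 (tau u : 'rV[R]_p) :
  bform L tau tau < 0 -> bform L u tau = 0 -> u != 0 -> 0 < bform L u u.
Proof.
move=> tau_lt0 u_tau u_neq0.
have L_sym : L^T = L by case: L_lor.
have tau_neq0 : tau != 0 by apply: contraTneq tau_lt0 => ->; rewrite bform0l ltxx.
have [Q uQ LQ] := lorentzian_congr.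
pose i0 := Ordinal (dim_gt0_of_rV_neq0 tau_neq0).
have time0_gt0 x : (x *m Q) 0 i0 = 0 -> x != 0 -> 0 < bform L x x.
  move=> xQ0 x_neq0; rewrite LQ; apply: lorentz_diag_gt0 xQ0 _ => //.
  by apply: contra x_neq0 => /eqP xQ; rewrite -(mulmxK uQ x) xQ mul0mx.
pose a := (u *m Q) 0 i0; pose t0 := (tau *m Q) 0 i0.
have t0_neq0 : t0 != 0.
  by apply: contraTneq tau_lt0 => t00; rewrite -leNgt ltW ?time0_gt0.
rewrite ltNge; apply/negP => uu_le0.
(* z has time coordinate 0, yet <z, z> = a^2 <tau, tau> + t0^2 <u, u> <= 0. *)
pose z := a *: tau - t0 *: u.
have zQ0 : (z *m Q) 0 i0 = 0.
  by rewrite mulmxBl -!scalemxAl !mxE /a /t0 !mxE mulrC subrr.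
have tau_u : bform L tau u = 0 by rewrite bform_sym.
have z_le0 : bform L z z <= 0.
  have -> : bform L z z = a ^+ 2 * bform L tau tau + t0 ^+ 2 * bform L u u.
    by rewrite /z !(bformBl, bformBr, bformZl, bformZr) tau_u u_tau; ring.
  by rewrite -(addr0 0) lerD // mulr_ge0_le0 ?sqr_ge0 // ltW.
have z0 : z = 0 by apply: contraTeq z_le0 => z_neq0; rewrite -ltNge time0_gt0.
have a0 : a = 0.
  have /eqP : a * bform L tau tau = 0.
    by rewrite -bformZl (subr0_eq z0) bformZl u_tau mulr0.
  by rewrite mulf_eq0 (lt_eqF tau_lt0) orbF => /eqP.
move: z0; rewrite /z a0 scale0r sub0r => /eqP; rewrite oppr_eq0 scaler_eq0.
by rewrite (negbTE t0_neq0) (negbTE u_neq0).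
Qed.

Lemma lorentzian_orth_null_pair_gt0 (eta w x : 'rV[R]_p) :
  bform L eta eta = 0 -> bform L w w = 0 -> bform L eta w != 0 ->
  bform L x eta = 0 -> bform L x w = 0 -> x != 0 -> 0 < bform L x x.
Proof.
move=> eta_null w_null eta_w x_eta x_w.
have L_sym : L^T = L by case: L_lor.
pose tau := eta - (bform L eta w)^-1 *: w.
apply: (@lorentzian_orth_timelike_gt0 tau).
  have -> : bform L tau tau = -2.
    rewrite /tau !(bformBl, bformBr, bformZl, bformZr) eta_null w_null.
    by rewrite (bform_sym w) // mulVf //; ring.
  by rewrite oppr_lt0 ltr0n.
by rewrite /tau bformBr bformZr x_eta x_w mulr0 subr0.
Qed.

Lemma lorentzian_timelike : (0 < p)%N -> exists tau, bform L tau tau < 0.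
Proof.
move=> p_gt0; have [Q uQ LQ] := lorentzian_congr; pose i0 := Ordinal p_gt0.
exists (delta_mx 0 i0 *m invmx Q); rewrite LQ mulmxKV // bform_diag (bigD1 i0) //=.
rewrite big1 => [|i /negPf i_neq]; last by rewrite !mxE i_neq andbF !mul0r.
by rewrite !mxE eqxx /= !mul1r addr0 ltrN10.
Qed.

Lemma lorentzian_null_orth_parallel (eta w : 'rV[R]_p) :
  bform L eta eta = 0 -> bform L w w = 0 -> w != 0 -> bform L eta w = 0 ->
  exists mu, eta = mu *: w.
Proof.
move=> eta_null w_null w_neq0 eta_w.
have L_sym : L^T = L by case: L_lor.
have [tau tau_lt0] := lorentzian_timelike (dim_gt0_of_rV_neq0 w_neq0).
have w_tau : bform L w tau != 0.
  apply/negP => /eqP w_tau.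
  by have := lorentzian_orth_timelike_gt0 tau_lt0 w_tau w_neq0; rewrite w_null ltxx.
pose mu := bform L eta tau / bform L w tau.
exists mu; apply/eqP; rewrite -subr_eq0; apply: contraT => y_neq0.
have y_tau : bform L (eta - mu *: w) tau = 0.
  by rewrite bformBl bformZl /mu divfK // subrr.
have := lorentzian_orth_timelike_gt0 tau_lt0 y_tau y_neq0.
rewrite !(bformBl, bformBr, bformZl, bformZr) eta_null w_null (bform_sym w) // eta_w.
by rewrite !(mulr0, subr0) ltxx.
Qed.

End Lorentzian.

Lemma exists_maximizer (T : Type) (f : T -> nat) (b : nat) (x1 : T) :
  (forall x, (f x <= b)%N) -> exists x0, forall x, (f x <= f x0)%N.
Proof.
move=> f_le_b.
suff max_from d x0 : (b - f x0 <= d)%N -> exists x0, forall x, (f x <= f x0)%N.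
  exact: (max_from _ x1 (leqnn _)).
elim: d x0 => [|d IHd] x0 bound.
  by exists x0 => x; rewrite (leq_trans (f_le_b x)) // -subn_eq0 -leqn0.
have [[x fx0_lt] | no_larger] := classic (exists x, (f x0 < f x)%N).
  by apply: (IHd x); move: (f_le_b x); lia.
by exists x0 => x; rewrite leqNgt; apply/negP => fx_gt; apply: no_larger; exists x.
Qed.

Lemma mul_rV_lin1_fun (F : pzRingType) m q (f : 'rV[F]_m -> 'rV[F]_q) :
  linear f -> forall u, u *m lin1_mx f = f u.
Proof.
by move=> f_lin u; apply: (mul_rV_lin1 (HB.pack f (GRing.isLinear.Build _ _ _ _ f f_lin))).
Qed.

Lemma linearN_fun (F : pzRingType) (U W : lmodType F) (f : U -> W) :
  linear f -> {morph f : x / - x}.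
Proof. by move=> f_lin; apply: (linearN (HB.pack f (GRing.isLinear.Build _ _ _ _ f f_lin))). Qed.

Lemma rank_row_mx_le (F : fieldType) m n1 n2 (A : 'M[F]_(m, n1)) (B : 'M[F]_(m, n2)) :
  (\rank (row_mx A B) <= \rank A + \rank B)%N.
Proof.
rewrite -mxrank_tr tr_row_mx -addsmxE -(mxrank_tr A) -(mxrank_tr B).
exact: mxrank_adds_leqif.
Qed.

Lemma kermx_stable (F : fieldType) m q (A : 'M[F]_(m, q)) (f : 'M[F]_m) :
  (forall y : 'rV_m, y *m A = 0 -> y *m f *m A = 0) -> stablemx (kermx A) f.
Proof.
move=> f_ker; apply/sub_kermxP/row_matrixP => i; move: (kermx A) (mulmx_ker A) => K KA0.
by rewrite row0 rowE !mulmxA f_ker // -mulmxA KA0 mulmx0.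
Qed.

Lemma stablemx_sqrtN1_rank_even (F : realFieldType) k (J P : 'M[F]_k) :
  J *m J = - 1%:M -> stablemx P J -> ~~ odd (\rank P).
Proof.
move=> JJ PJ; pose B := row_base P.
have BJ : stablemx B J by rewrite (eqmxMr J (eq_row_base P)) eq_row_base.
pose M := B *m J *m pinvmx B.
have MB : M *m B = B *m J by rewrite mulmxKpV.
have MM : M *m M = - 1%:M.
  apply: (row_free_inj (row_base_free P)).
  by rewrite -mulmxA MB mulmxA MB -mulmxA JJ mulmxN mulmx1 mulNmx mul1mx.
have detM2 : \det M ^+ 2 = (-1) ^+ \rank P.
  by rewrite expr2 -det_mulmx MM -scaleN1r detZ det1 mulr1.
apply/negP => odd_rk; have := sqr_ge0 (\det M).
by rewrite detM2 -signr_odd odd_rk expr1 ler0N1.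
Qed.

Lemma exists_nonzero_noneigenvalue (F : numFieldType) k (A : 'M[F]_k) :
  exists2 l : F, l != 0 & ~~ eigenvalue A l.
Proof.
have chi_neq0 : char_poly A != 0 := monic_neq0 (char_poly_monic A).
pose rs := [seq i.+1%:R : F | i <- iota 0 (size (char_poly A))].
have [/allP all_roots | ] := boolP (all (root (char_poly A)) rs).
  exfalso; move/negP: chi_neq0; apply; apply/eqP.
  apply: (roots_geq_poly_eq0 (rs := rs)); first exact/allP.
    by rewrite map_inj_uniq ?iota_uniq // => i j /eqP; rewrite eqr_nat eqSS => /eqP.
  by rewrite size_map size_iota.
case/allPn => _ /mapP [i _ ->] not_root; exists i.+1%:R; first by rewrite pnatr_eq0.
by rewrite eigenvalue_root_char.
Qed.

Lemma row_free_perturb (F : numFieldType) m q (N E : 'M[F]_(m, q)) :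
  row_free N -> exists2 e : F, e != 0 & row_free (N + e *: E).
Proof.
(* With N Z = 1, a kernel vector of N + e E is an eigenvector of E Z for -1/e. *)
case/row_freeP => Z NZ; have [l l_neq0 not_eig] := exists_nonzero_noneigenvalue (E *m Z).
exists (- l^-1); first by rewrite oppr_eq0 invr_eq0.
apply/inj_row_free => v /(congr1 (mulmx^~ Z)).
rewrite mul0mx mulmxDr mulmxDl -mulmxA NZ mulmx1 -scalemxAr -scalemxAl -mulmxA.
move/eqP; rewrite addr_eq0 scaleNr opprK => /eqP v_eig.
apply: contraNeq not_eig => v_neq0; apply/eigenvalueP; exists v => //.
by rewrite {2}v_eig scalerA mulfV // scale1r.
Qed.

Lemma row_free_col_mx_rV (F : fieldType) m q (B : 'M[F]_(m, q)) (v : 'rV[F]_q) :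
  row_free B -> ~~ (v <= B)%MS -> row_free (col_mx B v).
Proof.
move=> B_free vB; rewrite /row_free -addsmxE eqn_leq.
have [rk_le _] := mxrank_adds_leqif B v.
rewrite (leq_trans rk_le) ?(eqP B_free) ?rank_rV ?leq_add2l ?leq_b1 //=.
have B_lt : (B < B + v)%MS by rewrite ltmxE addsmxSl addsmx_sub submx_refl.
by rewrite addn1 -{1}(eqP B_free) rank_ltmx.
Qed.

Lemma max_rank_pencil_sub (F : numFieldType) m q (M0 M1 : 'M[F]_(m, q)) (t : 'rV[F]_m) :
  (forall e, \rank (M0 + e *: M1)%R <= \rank M0)%N -> t *m M0 = 0 -> (t *m M1 <= M0)%MS.
Proof.
(* Otherwise row_base M0 and t M1 are independent, and a suitable member of the
   pencil would have rank \rank M0 + 1. *)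
move=> M0_max tM0; apply: contraT => tM1_out.
pose B := row_base M0; pose Y := B *m pinvmx M0.
have YM0 : Y *m M0 = B by rewrite mulmxKpV ?eq_row_base.
have tM1_outB : ~~ (t *m M1 <= B)%MS by rewrite eq_row_base.
have [e e_neq0 Ne_free] := row_free_perturb (col_mx (Y *m M1) 0)
  (row_free_col_mx_rV (row_base_free M0) tM1_outB).
have pencil : col_mx Y (e^-1 *: t) *m (M0 + e *: M1) =
                col_mx B (t *m M1) + e *: col_mx (Y *m M1) 0.
  rewrite mul_col_mx !mulmxDr YM0 -!scalemxAl -!scalemxAr tM0 scaler0 add0r scalerA mulVf //.
  by rewrite scale1r scale_col_mx scaler0 add_col_mx addr0.
have := mxrankM_maxr (col_mx Y (e^-1 *: t)) (M0 + e *: M1).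
by rewrite pencil (eqP Ne_free) => /leq_trans/(_ (M0_max e)); rewrite addn1 ltnn.
Qed.

Lemma exists_bform_orth2 (R : realType) m k (G : 'M[R]_k) (P : 'M[R]_(m, k))
    (Y1 Y2 : 'rV[R]_k) : (3 <= \rank P)%N ->
  exists2 X : 'rV[R]_k, (X <= P)%MS & [/\ X != 0, bform G X Y1 = 0 & bform G X Y2 = 0].
Proof.
move=> rkP; pose K := row_mx (G *m Y1^T) (G *m Y2^T).
have rk_ker : (k <= \rank (kermx K) + 2)%N.
  by rewrite mxrank_ker; have := rank_leq_col K; lia.
have cap_neq0 : (P :&: kermx K)%MS != 0.
  apply/negP => /eqP cap0; move: (mxrank_sum_cap P (kermx K)).
  by move: (rank_leq_col (P + kermx K)%MS); rewrite cap0 mxrank0; lia.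
have /rowV0Pn [X XPK X_neq0] := cap_neq0.
exists X; first exact: submx_trans XPK (capmxSl _ _).
have /sub_kermxP : (X <= kermx K)%MS := submx_trans XPK (capmxSr _ _).
rewrite mul_mx_row -row_mx0 => /eq_row_mx [XY1 XY2].
by split; rewrite // /bform -mulmxA ?XY1 ?XY2 mxE.
Qed.

Lemma sum_row_mx (F : pzRingType) q N (c : 'I_N -> F) (f g : 'I_N -> 'rV[F]_q) :
  \sum_(i < N) c i *: row_mx (f i) (g i) =
  row_mx (\sum_(i < N) c i *: f i) (\sum_(i < N) c i *: g i).
Proof.
apply: (big_rec3 (fun a b c => a = row_mx b c)) => [|i x y z _ ->]; first by rewrite row_mx0.
by rewrite scale_row_mx add_row_mx.
Qed.

Lemma in_Sspan_image (R : realType) k q (b : 'rV[R]_k -> 'rV[R]_k -> 'rV[R]_q) X Y :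
  in_Sspan b (b X Y).
Proof. by exists 1%N, (fun=> X), (fun=> Y), (fun=> 1); rewrite big_ord1 scale1r. Qed.

Lemma wformE (R : realType) p (L : 'M[R]_p) (u1 u2 v1 v2 : 'rV[R]_p) :
  wform L (row_mx u1 u2) (row_mx v1 v2) = bform L u1 v1 - bform L u2 v2.
Proof. by rewrite /wform !row_mxKl !row_mxKr. Qed.

Lemma wform0l (R : realType) p (L : 'M[R]_p) (v : 'rV[R]_(p + p)) : wform L 0 v = 0.
Proof. by rewrite -row_mx0 -[v]hsubmxK wformE !bform0l subrr. Qed.

Section Proposition6.
Variables (R : realType) (n p : nat).
Variables (J G : 'M[R]_(2 * n)) (L : 'M[R]_p).
Variables (alpha : 'rV[R]_(2 * n) -> 'rV[R]_(2 * n) -> 'rV[R]_p) (w : 'rV[R]_p).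
Hypothesis JJ : J *m J = - 1%:M.
Hypothesis G_pos : pos_def_inner G.
Hypothesis G_J : forall X Y, bform G (X *m J) (Y *m J) = bform G X Y.
Hypothesis L_lor : lorentzian L.
Hypothesis alpha_sym : sym_bilinear alpha.
Hypothesis w_neq0 : w != 0.
Hypothesis w_null : bform L w w = 0.
Hypothesis alpha_w : forall X Y, bform L (alpha X Y) w = - bform G X Y.
Hypothesis beta_flat : flat L (betaF J alpha).
Hypothesis beta_gamma : forall X Y Z T,
  wform L (betaF J alpha X Y) (gammaF J alpha Z T)
  = wform L (betaF J alpha X T) (gammaF J alpha Z Y).

Local Notation V := 'rV[R]_(2 * n).
Local Notation gf := (bform G).
Local Notation lf := (bform L).
Local Notation beta := (betaF J alpha).
Implicit Types X Y Z T : V.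

Lemma lfC u v : lf u v = lf v u. Proof. by apply: bform_sym; case: L_lor. Qed.
Lemma gfC X Y : gf X Y = gf Y X. Proof. by apply: bform_sym; case: G_pos. Qed.
Lemma gf_gt0 X : X != 0 -> 0 < gf X X. Proof. by case: G_pos => _; apply. Qed.
Lemma mulmxJJ X : X *m J *m J = - X. Proof. by rewrite -mulmxA JJ mulmxN mulmx1. Qed.
Lemma mulmxJ_lin : linear (mulmx^~ J : V -> V).
Proof. by move=> a X Y; rewrite mulmxDl scalemxAl. Qed.
Lemma gfJl X Y : gf (X *m J) Y = - gf X (Y *m J). Proof. by rewrite -G_J mulmxJJ bformNl. Qed.
Lemma gf_J X : gf X (X *m J) = 0. Proof. by have := gfJl X X; rewrite gfC; lra. Qed.

Lemma alphaC X Y : alpha X Y = alpha Y X. Proof. by case: alpha_sym. Qed.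
Lemma alpha_linl Z : linear (alpha^~ Z). Proof. by case: alpha_sym => _ lin a X Y; apply: lin. Qed.
Lemma alphaNl X Z : alpha (- X) Z = - alpha X Z. Proof. exact: (linearN_fun (alpha_linl Z)). Qed.
Lemma alphaNr X Z : alpha Z (- X) = - alpha Z X. Proof. by rewrite !(alphaC Z) alphaNl. Qed.

Fact beta1_key : unit. Proof. by []. Qed.
Definition beta1 := locked_with beta1_key (fun X Y => alpha X Y + alpha (X *m J) (Y *m J)).
Fact beta2_key : unit. Proof. by []. Qed.
Definition beta2 := locked_with beta2_key (fun X Y => alpha X (Y *m J) - alpha (X *m J) Y).

Lemma beta1E X Y : beta1 X Y = alpha X Y + alpha (X *m J) (Y *m J).
Proof. by rewrite /beta1 unlock. Qed.
Lemma beta2E X Y : beta2 X Y = alpha X (Y *m J) - alpha (X *m J) Y.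
Proof. by rewrite /beta2 unlock. Qed.
Lemma betaE X Y : beta X Y = row_mx (beta1 X Y) (beta2 X Y).
Proof. by rewrite beta1E beta2E. Qed.

Lemma beta1C X Y : beta1 Y X = beta1 X Y. Proof. by rewrite !beta1E alphaC (alphaC (Y *m J)). Qed.
Lemma beta2C X Y : beta2 Y X = - beta2 X Y.
Proof. by rewrite !beta2E alphaC (alphaC (Y *m J)) opprB. Qed.
Lemma beta1Jl X Y : beta1 (X *m J) Y = - beta2 X Y.
Proof. by rewrite beta1E beta2E mulmxJJ alphaNl opprB addrC. Qed.
Lemma beta1Jr X Y : beta1 X (Y *m J) = beta2 X Y.
Proof. by rewrite beta1E beta2E mulmxJJ alphaNr. Qed.
Lemma beta2Jl X Y : beta2 (X *m J) Y = beta1 X Y.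
Proof. by rewrite beta1E beta2E mulmxJJ alphaNl opprK addrC. Qed.
Lemma beta2_diag X : beta2 X X = 0. Proof. by rewrite beta2E alphaC subrr. Qed.
Lemma beta1_w X Y : lf (beta1 X Y) w = -2 * gf X Y.
Proof. by rewrite beta1E bformDl !alpha_w G_J; ring. Qed.
Lemma beta1_linl Z : linear (beta1^~ Z).
Proof. by move=> a X Y; rewrite !beta1E mulmxJ_lin !alpha_linl scalerDr addrACA. Qed.

Lemma beta_orth_components v1 v2 : (forall X Y, wform L (row_mx v1 v2) (beta X Y) = 0) ->
  forall X Y, [/\ lf v1 (beta1 X Y) = 0, lf v1 (beta2 X Y) = 0,
                  lf v2 (beta1 X Y) = 0 & lf v2 (beta2 X Y) = 0].
Proof.
move=> v_orth X Y.
have e X' Y' : lf v1 (beta1 X' Y') - lf v2 (beta2 X' Y') = 0.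
  by rewrite -(v_orth X' Y') betaE wformE.
have e1 := e X Y.
have e2 := e Y X; rewrite beta1C beta2C bformNr in e2.
have e3 := e (X *m J) Y; rewrite beta1Jl beta2Jl bformNr in e3.
have e4 := e Y (X *m J); rewrite beta1C beta1Jl (beta2C (X *m J)) beta2Jl !bformNr in e4.
by split; lra.
Qed.

Lemma exists_null_U0_orth_beta1 : S_degenerate L beta ->
  exists2 eta, eta != 0 & [/\ lf eta eta = 0, U0 beta eta & forall X Y, lf eta (beta1 X Y) = 0].
Proof.
case=> v [v_neq0 [[N [Xs [Ys [cs v_def]]]] v_orth]].
pose v1 := \sum_(i < N) cs i *: beta1 (Xs i) (Ys i).
pose v2 := \sum_(i < N) cs i *: beta2 (Xs i) (Ys i).
have v_split : v = row_mx v1 v2.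
  by rewrite v_def -sum_row_mx; apply: eq_bigr => i _; rewrite betaE.
have orth : forall X Y, [/\ lf v1 (beta1 X Y) = 0, lf v1 (beta2 X Y) = 0,
                  lf v2 (beta1 X Y) = 0 & lf v2 (beta2 X Y) = 0].
  apply: beta_orth_components => X Y.
  by move: (v_orth _ (in_Sspan_image beta X Y)); rewrite v_split.
have [v1_0 | v1_neq0] := eqVneq v1 0.
  have v2_neq0 : v2 != 0 by apply: contraNneq v_neq0 => v2_0; rewrite v_split v1_0 v2_0 row_mx0.
  exists v2 => //; split; last by move=> X Y; case: (orth X Y).
    rewrite {2}/v2 bform_sumr big1 // => i _.
    by rewrite bformZr; case: (orth (Xs i) (Ys i)) => _ _ _ ->; rewrite mulr0.
  exists (\sum_(i < N) cs i *: beta (Xs i) (Ys i *m J)); split.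
    by exists N, Xs, (fun i => Ys i *m J), cs.
  under eq_bigr do rewrite betaE.
  by rewrite sum_row_mx row_mxKl; apply: eq_bigr => i _; rewrite beta1Jr.
exists v1 => //; split; last by move=> X Y; case: (orth X Y).
  rewrite {2}/v1 bform_sumr big1 // => i _.
  by rewrite bformZr; case: (orth (Xs i) (Ys i)) => -> _ _ _; rewrite mulr0.
by exists v; split; [exists N, Xs, Ys, cs | rewrite v_split row_mxKl].
Qed.

Section NullDirection.
Variables (s : nat) (B : 'M[R]_(s, p)) (eta : 'rV[R]_p).
Hypothesis s_lt_n : (s < n)%N.
Hypothesis B_free : row_free B.
Hypothesis B_U0 : forall u, U0 beta u <-> (u <= B)%MS.
Hypothesis eta_neq0 : eta != 0.
Hypothesis eta_null : lf eta eta = 0.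
Hypothesis eta_U0 : U0 beta eta.
Hypothesis eta_beta1 : forall X Y, lf eta (beta1 X Y) = 0.

Lemma exists_nonzero_vector : exists X : V, X != 0.
Proof.
have n2_gt0 : (0 < 2 * n)%N by lia.
exists (delta_mx 0 (Ordinal n2_gt0)); apply/negP => /eqP/rowP/(_ (Ordinal n2_gt0)).
by rewrite !mxE !eqxx; apply/eqP; rewrite oner_eq0.
Qed.

Lemma eta_w_neq0 : lf eta w != 0.
Proof.
apply/negP => /eqP eta_w.
have [mu eta_mu] := lorentzian_null_orth_parallel L_lor eta_null w_null w_neq0 eta_w.
have [X X_neq0] := exists_nonzero_vector.
move/eqP: (eta_beta1 X X); rewrite eta_mu bformZl lfC beta1_w !mulf_eq0.
rewrite (gt_eqF (gf_gt0 X_neq0)) orbF oppr_eq0 pnatr_eq0 orbF => /eqP mu0.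
by move: eta_neq0; rewrite eta_mu mu0 scale0r eqxx.
Qed.

Fact nu_key : unit. Proof. by []. Qed.
Definition nu := locked_with nu_key ((2 / lf eta w) *: eta).

Lemma nuE : nu = (2 / lf eta w) *: eta. Proof. by rewrite /nu unlock. Qed.
Lemma nu_null : lf nu nu = 0. Proof. by rewrite nuE bformZl bformZr eta_null !mulr0. Qed.
Lemma nu_w : lf nu w = 2. Proof. by rewrite nuE bformZl divfK ?eta_w_neq0. Qed.
Lemma nu_beta1 X Y : lf nu (beta1 X Y) = 0. Proof. by rewrite nuE bformZl eta_beta1 mulr0. Qed.

Lemma beta1_in_B X Y : (beta1 X Y <= B)%MS.
Proof.
by apply/B_U0; exists (beta X Y); split; [exact: in_Sspan_image | rewrite betaE row_mxKl].
Qed.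
Lemma nu_in_B : (nu <= B)%MS. Proof. by rewrite nuE; exact/scalemx_sub/B_U0. Qed.

Lemma orth_nu_w_gt0 x : lf x nu = 0 -> lf x w = 0 -> x != 0 -> 0 < lf x x.
Proof.
apply: lorentzian_orth_null_pair_gt0 nu_null w_null _ => //.
by rewrite nu_w pnatr_eq0.
Qed.
Lemma orth_nu_w_ge0 x : lf x nu = 0 -> lf x w = 0 -> 0 <= lf x x.
Proof.
move=> x_nu x_w; have [-> | x_neq0] := eqVneq x 0; first by rewrite bform0l.
exact/ltW/orth_nu_w_gt0.
Qed.
Lemma orth_nu_w_eq0 x : lf x nu = 0 -> lf x w = 0 -> lf x x = 0 -> x = 0.
Proof.
move=> x_nu x_w x_null; apply/eqP; apply: contraT => x_neq0.
by have := orth_nu_w_gt0 x_nu x_w x_neq0; rewrite x_null ltxx.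
Qed.

Fact delta_key : unit. Proof. by []. Qed.
Definition delta := locked_with delta_key (fun X Y => beta1 X Y + gf X Y *: nu).

Lemma deltaE X Y : delta X Y = beta1 X Y + gf X Y *: nu. Proof. by rewrite /delta unlock. Qed.

Lemma delta_w X Y : lf (delta X Y) w = 0.
Proof. by rewrite deltaE bformDl bformZl beta1_w nu_w; ring. Qed.
Lemma delta_nu X Y : lf (delta X Y) nu = 0.
Proof. by rewrite deltaE bformDl bformZl lfC nu_beta1 nu_null mulr0 addr0. Qed.
Lemma delta_dot X Y Z T : lf (delta X Y) (delta Z T) = lf (beta1 X Y) (beta1 Z T).
Proof.
rewrite !deltaE bformDl !bformDr !bformZl !bformZr nu_null !(lfC _ nu) !nu_beta1.
by rewrite !mulr0 !addr0.
Qed.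
Lemma deltaC X Y : delta Y X = delta X Y. Proof. by rewrite !deltaE beta1C gfC. Qed.
Lemma deltaJr X Y : delta X (Y *m J) = beta2 X Y + gf X (Y *m J) *: nu.
Proof. by rewrite deltaE beta1Jr. Qed.
Lemma deltaJC X Y : delta Y (X *m J) = - delta X (Y *m J).
Proof. by rewrite !deltaJr beta2C gfC gfJl opprD scaleNr. Qed.
Lemma delta_linl Z : linear (delta^~ Z).
Proof.
move=> a X Y; rewrite !deltaE beta1_linl bformDl bformZl scalerDl -scalerA.
by rewrite scalerDr addrACA.
Qed.
Lemma delta_linr X : linear (delta X).
Proof. by move=> a Y Z; rewrite -!(deltaC X) delta_linl. Qed.

Definition beta_hat X Y := row_mx (delta X Y) (delta X (Y *m J)).

Lemma beta_hat_flat : flat L beta_hat.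
Proof.
move=> X Y Z T; have := beta_flat X Y Z T.
by rewrite !betaE !wformE !delta_dot !beta1Jr.
Qed.
Lemma beta_hat_linl Y : linear (beta_hat^~ Y).
Proof. by move=> a X Z; rewrite /beta_hat !delta_linl scale_row_mx add_row_mx. Qed.
Lemma beta_hat_linr X : linear (beta_hat X).
Proof. by move=> a Y Z; rewrite /beta_hat mulmxJ_lin !delta_linr scale_row_mx add_row_mx. Qed.

Definition beta_hat_mx x := lin1_mx (beta_hat x).
Definition delta_mat x := lin1_mx (delta x).

Lemma mul_beta_hat_mx x y : y *m beta_hat_mx x = beta_hat x y.
Proof. exact: mul_rV_lin1_fun (beta_hat_linr x) y. Qed.
Lemma mul_delta_mat x y : y *m delta_mat x = delta x y.
Proof. exact: mul_rV_lin1_fun (delta_linr x) y. Qed.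

Lemma beta_hat_mx_lin x t a : beta_hat_mx (x + a *: t) = beta_hat_mx x + a *: beta_hat_mx t.
Proof.
apply/row_matrixP => i; rewrite !rowE mulmxDr -scalemxAr !mul_beta_hat_mx.
by rewrite (addrC x) beta_hat_linl addrC.
Qed.

Lemma beta_hat_mx_split x : beta_hat_mx x = row_mx (delta_mat x) (J *m delta_mat x).
Proof.
by apply/row_matrixP => i; rewrite !rowE mul_beta_hat_mx mul_mx_row mulmxA !mul_delta_mat.
Qed.

Lemma rank_delta_mat x : (\rank (delta_mat x) < s)%N.
Proof.
have [X0 X0_neq0] := exists_nonzero_vector.
have D_B : (delta_mat x <= B)%MS.
  apply/row_subP => i; rewrite rowE mul_delta_mat deltaE.
  by rewrite addmx_sub ?scalemx_sub ?beta1_in_B ?nu_in_B.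
have v0_out : ~~ (beta1 X0 X0 <= delta_mat x)%MS.
  apply/negP => /submxP [u v0_u]; move: (beta1_w X0 X0).
  rewrite v0_u mul_delta_mat delta_w; have := gf_gt0 X0_neq0; lra.
have D_lt : (delta_mat x < delta_mat x + beta1 X0 X0)%MS.
  by rewrite ltmxE addsmxSl addsmx_sub submx_refl.
rewrite -(eqP B_free); apply: leq_trans (rank_ltmx D_lt) _.
by rewrite mxrankS // addsmx_sub D_B beta1_in_B.
Qed.

Lemma rank_beta_hat_mx x : (\rank (beta_hat_mx x) <= (\rank (delta_mat x)).*2)%N.
Proof.
rewrite beta_hat_mx_split -addnn (leq_trans (rank_row_mx_le _ _)) //.
by rewrite leq_add2l mxrankM_maxr.
Qed.

Lemma rank_kermx_beta_hat x : (2 * (n - s) + 2 <= \rank (kermx (beta_hat_mx x)))%N.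
Proof. by rewrite mxrank_ker; have := rank_beta_hat_mx x; have := rank_delta_mat x; lia. Qed.

Lemma kermx_beta_hat_stable x : stablemx (kermx (beta_hat_mx x)) J.
Proof.
apply: kermx_stable => y; rewrite !mul_beta_hat_mx /beta_hat mulmxJJ -row_mx0.
by case/eq_row_mx => y_ker ->; rewrite (linearN_fun (delta_linr x)) y_ker oppr0.
Qed.

Lemma delta_J_diag t : delta t (t *m J) = 0.
Proof. by rewrite deltaJr beta2_diag gf_J scale0r addr0. Qed.

Lemma delta_eq0_of_diag t : delta t t = 0 -> forall Y, delta t Y = 0.
Proof.
move=> delta_tt Y; have := beta_hat_flat t Y Y t.
rewrite /beta_hat !wformE delta_tt delta_J_diag !bform0l subrr (deltaC t Y) (deltaJC t Y).
rewrite bformNr opprK.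
have := orth_nu_w_ge0 (delta_nu t Y) (delta_w t Y).
have := orth_nu_w_ge0 (delta_nu t (Y *m J)) (delta_w t (Y *m J)).
by move=> ? ? ?; apply: orth_nu_w_eq0; rewrite ?delta_nu ?delta_w //; lra.
Qed.

Lemma delta_diag_kermx_max_rank x0 :
  (forall x, \rank (beta_hat_mx x) <= \rank (beta_hat_mx x0))%N ->
  forall t, (t <= kermx (beta_hat_mx x0))%MS -> delta t t = 0.
Proof.
move=> x0_max t /sub_kermxP t_ker.
have [u tt_u] : exists u, beta_hat t t = beta_hat x0 u.
  have /submxP [u] : (t *m beta_hat_mx t <= beta_hat_mx x0)%MS.
    by apply: max_rank_pencil_sub t_ker => e; rewrite -beta_hat_mx_lin x0_max.
  by rewrite !mul_beta_hat_mx => ->; exists u.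
have x0_t : beta_hat x0 t = 0 by rewrite -mul_beta_hat_mx.
apply: orth_nu_w_eq0; rewrite ?delta_nu ?delta_w //.
have := beta_hat_flat x0 u t t; rewrite -tt_u x0_t wform0l /beta_hat wformE delta_J_diag.
by rewrite bform0l subr0.
Qed.

Lemma beta1_ker X : (forall Y, delta X Y = 0) -> forall Y, beta1 X Y = - (gf X Y *: nu).
Proof. by move=> X_ker Y; apply/eqP; rewrite -addr_eq0 -deltaE X_ker. Qed.

Lemma nu_alpha_ker X : (forall Y, delta X Y = 0) -> forall Z T,
  gf X X * lf nu (alpha Z T) =
  gf X T * lf nu (alpha Z X) - gf X (T *m J) * lf nu (alpha Z (X *m J)).
Proof.
move=> X_ker Z T; have := beta_gamma X X Z T.
rewrite !betaE /gammaF !wformE -!beta1Jr !beta1_ker // !bformNl !bformZl gf_J; lra.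
Qed.

Lemma nu_orth_alpha m (P : 'M[R]_(m, 2 * n)) : (3 <= \rank P)%N ->
  (forall S, (S <= P)%MS -> forall Y, delta S Y = 0) -> forall Z T, lf nu (alpha Z T) = 0.
Proof.
move=> rkP P_ker Z T.
have cancel X b : X != 0 -> gf X X * b = 0 -> b = 0.
  by move=> /gf_gt0/gt_eqF X_pos /eqP; rewrite mulf_eq0 X_pos => /eqP.
have /rowV0Pn [X1 X1P X1_neq0] : P != 0 by apply: contraTneq rkP => ->; rewrite mxrank0.
have [X2 X2P [X2_neq0 X21 X21J]] := exists_bform_orth2 G X1 (X1 *m J) rkP.
have nu_X1 Z' : lf nu (alpha Z' X1) = 0.
  by apply: (cancel X2) => //; rewrite (nu_alpha_ker (P_ker _ X2P)) X21 X21J !mul0r subrr.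
have nu_X1J Z' : lf nu (alpha Z' (X1 *m J)) = 0.
  apply: (cancel X2) => //; rewrite (nu_alpha_ker (P_ker _ X2P)) mulmxJJ bformNr.
  by rewrite X21 X21J oppr0 !mul0r subrr.
by apply: (cancel X1) => //; rewrite (nu_alpha_ker (P_ker _ X1P)) nu_X1 nu_X1J !mulr0 subrr.
Qed.

Lemma curvature_nonpos S : (forall Y, delta S Y = 0) -> (forall Z T, lf nu (alpha Z T) = 0) ->
  lf (alpha S S) (alpha (S *m J) (S *m J)) - lf (alpha S (S *m J)) (alpha S (S *m J)) <= 0.
Proof.
move=> S_ker nu_alpha.
have SJSJ : alpha (S *m J) (S *m J) = - (gf S S *: nu) - alpha S S.
  by rewrite -(beta1_ker S_ker S) beta1E addrC addKr.
have A_nu : lf (alpha S S) nu = 0 by rewrite lfC nu_alpha.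
have A_ge0 : 0 <= lf (alpha S S) (alpha S S).
  pose q := alpha S S + (gf S S / 2) *: nu.
  have -> : lf (alpha S S) (alpha S S) = lf q q.
    by rewrite !(bformDl, bformDr, bformZl, bformZr) A_nu (lfC nu) A_nu nu_null !mulr0 !addr0.
  apply: orth_nu_w_ge0; first by rewrite bformDl bformZl A_nu nu_null mulr0 addr0.
  by rewrite bformDl bformZl alpha_w nu_w; lra.
have C_ge0 : 0 <= lf (alpha S (S *m J)) (alpha S (S *m J)).
  by apply: orth_nu_w_ge0; [rewrite lfC nu_alpha | rewrite alpha_w gf_J oppr0].
by rewrite SJSJ bformBr bformNr bformZr A_nu mulr0 oppr0 sub0r; lra.
Qed.

Lemma exists_stable_subspace_curvature_nonpos : exists (m : nat) (P : 'M[R]_(2 * n)),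
  \rank P = (2 * m)%N /\ stablemx P J /\ ((n - s).+1 <= m)%N /\
  forall S, (S <= P)%MS ->
    lf (alpha S S) (alpha (S *m J) (S *m J)) - lf (alpha S (S *m J)) (alpha S (S *m J)) <= 0.
Proof.
have [x0 x0_max] := exists_maximizer 0 (fun x : V => rank_leq_col (beta_hat_mx x)).
pose P := kermx (beta_hat_mx x0).
have P_ker S (SP : (S <= P)%MS) :=
  delta_eq0_of_diag (delta_diag_kermx_max_rank x0_max SP).
have rkP := rank_kermx_beta_hat x0; rewrite -/P in rkP.
have [m rkP_m] : exists m, \rank P = (2 * m)%N.
  have P_even := stablemx_sqrtN1_rank_even JJ (kermx_beta_hat_stable x0).
  by exists (\rank P)./2; move: (odd_double_half (\rank P)); rewrite (negbTE P_even); lia.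
have rkP3 : (3 <= \rank P)%N by lia.
exists m, P; split=> //; split; first exact: kermx_beta_hat_stable.
split; first lia.
by move=> S /P_ker S_ker; apply: curvature_nonpos => //; apply: nu_orth_alpha rkP3 P_ker.
Qed.

End NullDirection.

End Proposition6.

Theorem proposition6 (R : realType) (n p : nat)
  (J : 'M[R]_(2 * n)) (G : 'M[R]_(2 * n)) (L : 'M[R]_p)
  (alpha : 'rV[R]_(2 * n) -> 'rV[R]_(2 * n) -> 'rV[R]_p) (w : 'rV[R]_p) (s : nat) :
  J *m J = - 1%:M ->
  pos_def_inner G ->
  (forall X Y : 'rV[R]_(2 * n), bform G (X *m J) (Y *m J) = bform G X Y) ->
  (2 <= p)%N ->
  lorentzian L ->
  sym_bilinear alpha ->
  w != 0 -> bform L w w = 0 ->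
  (forall X Y, bform L (alpha X Y) w = - bform G X Y) ->
  flat L (betaF J alpha) ->
  (forall X Y Z T, wform L (betaF J alpha X Y) (gammaF J alpha Z T)
                   = wform L (betaF J alpha X T) (gammaF J alpha Z Y)) ->
  S_degenerate L (betaF J alpha) ->
  has_dim (U0 (betaF J alpha)) s ->
  (s.+1 <= n)%N ->
  exists (m : nat) (P : 'M[R]_(2 * n)),
    \rank P = (2 * m)%N /\ (P *m J <= P)%MS /\ ((n - s).+1 <= m)%N /\
    forall S : 'rV[R]_(2 * n), (S <= P)%MS ->
      bform L (alpha S S) (alpha (S *m J) (S *m J))
      - bform L (alpha S (S *m J)) (alpha S (S *m J)) <= 0.
Proof.
move=> JJ G_pos G_J _ L_lor alpha_sym w_neq0 w_null alpha_w beta_flat beta_gamma.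
move=> S_deg [B [B_free B_U0]] s_lt_n.
have [eta eta_neq0 [eta_null eta_U0 eta_beta1]] := exists_null_U0_orth_beta1 JJ alpha_sym S_deg.
exact: (exists_stable_subspace_curvature_nonpos JJ G_pos G_J L_lor alpha_sym w_neq0 w_null
  alpha_w beta_flat beta_gamma s_lt_n B_free B_U0 eta_neq0 eta_null eta_U0 eta_beta1).
Qed.
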